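(* Let $\mathscr T$ be a $\mathscr J$-theory, $A,B:\mathscr T\to\mathscr C$ $\mathscr T$-algebras, and $f:V\to\mathscr C(|A|,|B|)$ a morphism in $\mathscr V$. Then $f$ is valued in $\mathscr T$-homomorphisms from $A$ to $B$ if and only if $\Phi_{JI}\cdot f=\Psi_{JI}\cdot f$ for all objects $J$ of $\mathscr J$.
   Context: $(\mathscr V,\otimes,I)$ is a closed symmetric monoidal category, $\underline{\mathscr V}$ the associated $\mathscr V$-category; everything is $\mathscr V$-enriched. A system of arities is a full sub-$\mathscr V$-category $\mathscr J\hookrightarrow\underline{\mathscr V}$ containing $I$ and closed under $\otimes$. A cotensor $[V,C]$ is an object with counit $V\to\mathscr C([V,C],C)$ inducing $\mathscr C(-,[V,C])\cong\underline{\mathscr V}(V,\mathscr C(-,C))$. A $\mathscr J$-theory is a $\mathscr V$-category $\mathscr T$ with $\mathrm{ob}\,\mathscr T=\mathrm{ob}\,\mathscr J$ and an identity-on-objects $\tau:\mathscr J^{\mathrm{op}}\to\mathscr T$ preserving cotensors by objects of $\mathscr J$; $J$ is a cotensor $[J,I]$ with counit $\gamma_J:J\cong\underline{\mathscr V}(I,J)=\mathscr J^{\mathrm{op}}(J,I)\xrightarrow{\tau}\mathscr T(J,I)$. A $\mathscr T$-algebra in $\mathscr C$ is a $\mathscr V$-functor $A:\mathscr T\to\mathscr C$ preserving cotensors by objects of $\mathscr J$; carrier $|A|=AI$; $AJ$ is a cotensor of $|A|$ by $J$ with counit $J\xrightarrow{\gamma_J}\mathscr T(J,I)\xrightarrow{A_{JI}}\mathscr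 C(AJ,|A|)$. $\lambda_J:\mathscr C(|A|,|B|)\to\mathscr C(AJ,BJ)$ is the morphism induced by the cotensors $AJ=[J,|A|]$, $BJ=[J,|B|]$: the transpose $\mathscr C(|A|,|B|)\to\underline{\mathscr V}(J,\mathscr C(AJ,|B|))$ of ($J\otimes\mathscr C(|A|,|B|)\to\mathscr C(AJ,|A|)\otimes\mathscr C(|A|,|B|)\xrightarrow{c}\mathscr C(AJ,|B|)$, counit then composition) followed by the inverse of $\mathscr C(AJ,BJ)\cong\underline{\mathscr V}(J,\mathscr C(AJ,|B|))$. $\phi_{JK}=c\cdot(A_{JK}\otimes\lambda_K):\mathscr T(J,K)\otimes\mathscr C(|A|,|B|)\to\mathscr C(AJ,AK)\otimes\mathscr C(AK,BK)\to\mathscr C(AJ,BK)$ and $\psi_{JK}=c\cdot(B_{JK}\otimes\lambda_J):\mathscr T(J,K)\otimes\mathscr C(|A|,|B|)\to\mathscr C(BJ,BK)\otimes\mathscr C(AJ,BJ)\to\mathscr C(AJ,BK)$ ($c$ = composition); $\Phi_{JK},\Psi_{JK}:\mathscr C(|A|,|B|)\to\underline{\mathscr V}(\mathscr T(J,K),\mathscr C(AJ,BK))$ are their transposes. $f$ is valued in $\mathscr T$-homomorphisms from $A$ to $B$ if the family $\lambda_J\cdot f:V\to\mathscr C(AJ,BJ)$ is extraordinarily $\mathscr V$-natural in $J\in\mathscr T$ with respect to $\mathscr C(A-,B-):\mathscr T^{\mathrm{op}}\otimes\mathscr T\to\underline{\mathscr V}$. *)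

Record SMCCdata := {
  ob : Type;
  hom : ob -> ob -> Type;
  idm : forall X, hom X X;
  comp : forall X Y Z, hom Y Z -> hom X Y -> hom X Z;
  tens : ob -> ob -> ob;
  tensm : forall X X' Y Y', hom X X' -> hom Y Y' -> hom (tens X Y) (tens X' Y');
  unit : ob;
  assoc : forall X Y Z, hom (tens (tens X Y) Z) (tens X (tens Y Z));
  assoc_inv : forall X Y Z, hom (tens X (tens Y Z)) (tens (tens X Y) Z);
  lunit : forall X, hom (tens unit X) X;
  lunit_inv : forall X, hom X (tens unit X);
  runit : forall X, hom (tens X unit) X;
  runit_inv : forall X, hom X (tens X unit);
  sym : forall X Y, hom (tens X Y) (tens Y X);
  ihom : ob -> ob -> ob;
  ev : forall X Y, hom (tens X (ihom X Y)) Y;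
  curry : forall X Y Z, hom (tens X Z) Y -> hom Z (ihom X Y)
}.

Arguments hom {s} _ _.
Arguments idm {s} X.
Arguments comp {s X Y Z} _ _.
Arguments tens {s} _ _.
Arguments tensm {s X X' Y Y'} _ _.
Arguments unit {s}.
Arguments assoc {s X Y Z}.
Arguments assoc_inv {s X Y Z}.
Arguments lunit {s X}.
Arguments lunit_inv {s X}.
Arguments runit {s X}.
Arguments runit_inv {s X}.
Arguments sym {s X Y}.
Arguments ihom {s} _ _.
Arguments ev {s X Y}.
Arguments curry {s X Y Z} _.

Record is_SMCC (V : SMCCdata) : Prop := {
  comp_idl : forall (X Y : ob V) (f : hom X Y), comp (idm Y) f = f;
  comp_idr : forall (X Y : ob V) (f : hom X Y), comp f (idm X) = f;
  comp_assoc : forall (X Y Z W : ob V) (h : hom Z W) (g : hom Y Z) (f : hom X Y),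
      comp h (comp g f) = comp (comp h g) f;
  tensm_id : forall X Y : ob V, tensm (idm X) (idm Y) = idm (tens X Y);
  tensm_comp : forall (X X' X'' Y Y' Y'' : ob V) (f' : hom X' X'') (f : hom X X')
      (g' : hom Y' Y'') (g : hom Y Y'),
      tensm (comp f' f) (comp g' g) = comp (tensm f' g') (tensm f g);
  assoc_iso1 : forall X Y Z : ob V, comp (@assoc V X Y Z) assoc_inv = idm _;
  assoc_iso2 : forall X Y Z : ob V, comp assoc_inv (@assoc V X Y Z) = idm _;
  lunit_iso1 : forall X : ob V, comp (@lunit V X) lunit_inv = idm _;
  lunit_iso2 : forall X : ob V, comp lunit_inv (@lunit V X) = idm _;
  runit_iso1 : forall X : ob V, comp (@runit V X) runit_inv = idm _;
  runit_iso2 : forall X : ob V, comp runit_inv (@runit V X) = idm _;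
  sym_inv : forall X Y : ob V, comp (@sym V Y X) sym = idm (tens X Y);
  assoc_nat : forall (X X' Y Y' Z Z' : ob V) (f : hom X X') (g : hom Y Y') (h : hom Z Z'),
      comp assoc (tensm (tensm f g) h) = comp (tensm f (tensm g h)) assoc;
  lunit_nat : forall (X Y : ob V) (f : hom X Y), comp lunit (tensm (idm unit) f) = comp f lunit;
  runit_nat : forall (X Y : ob V) (f : hom X Y), comp runit (tensm f (idm unit)) = comp f runit;
  sym_nat : forall (X X' Y Y' : ob V) (f : hom X X') (g : hom Y Y'),
      comp sym (tensm f g) = comp (tensm g f) sym;
  pentagon : forall W X Y Z : ob V,
      comp (@assoc V W X (tens Y Z)) (@assoc V (tens W X) Y Z)
      = comp (tensm (idm W) (@assoc V X Y Z))
             (comp (@assoc V W (tens X Y) Z) (tensm (@assoc V W X Y) (idm Z)));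
  triangle : forall X Y : ob V,
      comp (tensm (idm X) (@lunit V Y)) (@assoc V X unit Y)
      = tensm (@runit V X) (idm Y);
  hexagon : forall X Y Z : ob V,
      comp (@assoc V Y Z X) (comp (@sym V X (tens Y Z)) (@assoc V X Y Z))
      = comp (tensm (idm Y) (@sym V X Z))
             (comp (@assoc V Y X Z) (tensm (@sym V X Y) (idm Z)));
  ev_curry : forall (X Y Z : ob V) (g : hom (tens X Z) Y),
      comp ev (tensm (idm X) (curry g)) = g;
  curry_unique : forall (X Y Z : ob V) (h : hom Z (ihom X Y)),
      curry (comp ev (tensm (idm X) h)) = h
}.

Definition is_iso {V : SMCCdata} {X Y : ob V} (f : hom X Y) : Prop :=
  exists g : hom Y X, comp g f = idm X /\ comp f g = idm Y.

Record VCat (V : SMCCdata) := {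
  vob : Type;
  vhom : vob -> vob -> ob V;
  vcomp : forall a b c, hom (tens (vhom b c) (vhom a b)) (vhom a c);
  vid : forall a, hom unit (vhom a a)
}.
Arguments vob {V} _.
Arguments vhom {V} _ _ _.
Arguments vcomp {V} _ _ _ _.
Arguments vid {V} _ _.

Definition is_vcat {V : SMCCdata} (C : VCat V) : Prop :=
  (forall a b c d,
     comp (vcomp C a b d) (tensm (vcomp C b c d) (idm (vhom C a b)))
     = comp (vcomp C a c d) (comp (tensm (idm (vhom C c d)) (vcomp C a b c)) assoc))
  /\ (forall a b, comp (vcomp C a b b) (tensm (vid C b) (idm (vhom C a b))) = lunit)
  /\ (forall a b, comp (vcomp C a a b) (tensm (idm (vhom C a b)) (vid C a)) = runit).

Record VFunctor {V : SMCCdata} (C D : VCat V) := {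
  fob : vob C -> vob D;
  fmap : forall a b, hom (vhom C a b) (vhom D (fob a) (fob b))
}.
Arguments fob {V C D} _ _.
Arguments fmap {V C D} _ _ _.

Definition is_vfunctor {V : SMCCdata} {C D : VCat V} (F : VFunctor C D) : Prop :=
  (forall a b c,
     comp (fmap F a c) (vcomp C a b c)
     = comp (vcomp D (fob F a) (fob F b) (fob F c)) (tensm (fmap F b c) (fmap F a b)))
  /\ (forall a, comp (fmap F a a) (vid C a) = vid D (fob F a)).

Definition underlineV (V : SMCCdata) : VCat V := {|
  vob := ob V;
  vhom := fun X Y => ihom X Y;
  (* X (x) ([Y,Z] (x) [X,Y]) -> X (x) ([X,Y] (x) [Y,Z]) -> (X (x) [X,Y]) (x) [Y,Z]
     -> Y (x) [Y,Z] -> Z *)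
  vcomp := fun X Y Z =>
    curry (comp ev (comp (tensm ev (idm (ihom Y Z)))
                         (comp assoc_inv (tensm (idm X) sym))));
  vid := fun X => curry runit
|}.

Definition vop {V : SMCCdata} (C : VCat V) : VCat V := {|
  vob := vob C;
  vhom := fun a b => vhom C b a;
  vcomp := fun a b c => comp (vcomp C c b a) sym;
  vid := fun a => vid C a
|}.

Definition fullsub {V : SMCCdata} (C : VCat V) (P : vob C -> Prop) : VCat V := {|
  vob := { a : vob C | P a };
  vhom := fun a b => vhom C (proj1_sig a) (proj1_sig b);
  vcomp := fun a b c => vcomp C (proj1_sig a) (proj1_sig b) (proj1_sig c);
  vid := fun a => vid C (proj1_sig a)
|}.

Definition cot_map {V : SMCCdata} (C : VCat V) (v : ob V) (c0 k : vob C)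
  (gam : hom v (vhom C k c0)) (x : vob C) : hom (vhom C x k) (ihom v (vhom C x c0)) :=
  curry (comp (vcomp C x k c0) (tensm gam (idm (vhom C x k)))).

(* k, with counit gam, is a cotensor [v, c0] *)
Definition is_cotensor {V : SMCCdata} (C : VCat V) (v : ob V) (c0 k : vob C)
  (gam : hom v (vhom C k c0)) : Prop :=
  forall x : vob C, is_iso (cot_map C v c0 k gam x).

Definition preserves_cotensors {V : SMCCdata} (P : ob V -> Prop) {C D : VCat V}
  (F : VFunctor C D) : Prop :=
  forall (v : ob V), P v -> forall (c0 k : vob C) (gam : hom v (vhom C k c0)),
    is_cotensor C v c0 k gam ->
    is_cotensor D v (fob F c0) (fob F k) (comp (fmap F k c0) gam).

(* A system of arities: a full sub-V-category of underline V (given by the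
   predicate jP on objects) containing I and closed under (x). *)
Record Arities (V : SMCCdata) := {
  jP : ob V -> Prop;
  jP_unit : jP unit;
  jP_tens : forall X Y, jP X -> jP Y -> jP (tens X Y)
}.
Arguments jP {V} _ _.
Arguments jP_unit {V} _.

Definition Jcat {V : SMCCdata} (J : Arities V) : VCat V :=
  fullsub (underlineV V) (jP J).

Definition Jobj {V : SMCCdata} (J : Arities V) : Type := vob (Jcat J).

Definition JI {V : SMCCdata} (J : Arities V) : Jobj J := exist _ unit (jP_unit J).

(* J-theory data: a V-category with objects those of J, together with the
   identity-on-objects map tau : J^op -> T on homs. *)
Record JTheory {V : SMCCdata} (J : Arities V) := {
  th_hom : Jobj J -> Jobj J -> ob V;
  th_comp : forall a b c, hom (tens (th_hom b c) (th_hom a b)) (th_hom a c);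
  th_id : forall a, hom unit (th_hom a a);
  th_tau : forall a b, hom (vhom (vop (Jcat J)) a b) (th_hom a b)
}.
Arguments th_hom {V J} _ _ _.
Arguments th_tau {V J} _ _ _.
Arguments th_comp {V J} _ _ _ _.
Arguments th_id {V J} _ _.

Definition th_cat {V : SMCCdata} {J : Arities V} (T : JTheory J) : VCat V := {|
  vob := Jobj J;
  vhom := th_hom T;
  vcomp := th_comp T;
  vid := th_id T
|}.

Definition th_tauF {V : SMCCdata} {J : Arities V} (T : JTheory J)
  : VFunctor (vop (Jcat J)) (th_cat T) :=
  @Build_VFunctor V (vop (Jcat J)) (th_cat T) (fun a => a) (th_tau T).

Definition is_JTheory {V : SMCCdata} {J : Arities V} (T : JTheory J) : Prop :=
  is_vcat (th_cat T) /\ is_vfunctor (th_tauF T) /\ preserves_cotensors (jP J) (th_tauF T).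

(* gamma_J : J ~= underline V(I, J) = J^op(J, I) --tau--> T(J, I) *)
Definition gammaJ {V : SMCCdata} {J : Arities V} (T : JTheory J) (a : Jobj J)
  : hom (proj1_sig a) (th_hom T a (JI J)) :=
  comp (th_tau T a (JI J)) (curry (@lunit V (proj1_sig a))).

Definition is_algebra {V : SMCCdata} {J : Arities V} (T : JTheory J) {C : VCat V}
  (A : VFunctor (th_cat T) C) : Prop :=
  is_vfunctor A /\ preserves_cotensors (jP J) A.

Section AlgebraOps.
Context {V : SMCCdata} {J : Arities V} (T : JTheory J) {C : VCat V}.

Definition carrier (A : VFunctor (th_cat T) C) : vob C := fob A (JI J).

(* counit of AJ = [J, |A|]:  J --gamma_J--> T(J,I) --A_{JI}--> C(AJ, |A|) *)
Definition alg_counit (A : VFunctor (th_cat T) C) (a : Jobj J)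
  : hom (proj1_sig a) (vhom C (fob A a) (carrier A)) :=
  comp (fmap A a (JI J)) (gammaJ T a).

(* lam is the family of morphisms lambda_J : C(|A|,|B|) -> C(AJ,BJ) induced by
   the cotensors AJ = [J,|A|], BJ = [J,|B|]: i.e. composing lambda_J with the
   canonical C(AJ,BJ) -> [J, C(AJ,|B|)] gives the transpose of
   J (x) C(|A|,|B|) -> C(AJ,|A|) (x) C(|A|,|B|) -> C(AJ,|B|). *)
Definition is_lambda (A B : VFunctor (th_cat T) C)
  (lam : forall a : Jobj J,
           hom (vhom C (carrier A) (carrier B)) (vhom C (fob A a) (fob B a))) : Prop :=
  forall a : Jobj J,
    comp (cot_map C (proj1_sig a) (carrier B) (fob B a) (alg_counit B a) (fob A a)) (lam a)
    = curry (comp (vcomp C (fob A a) (carrier A) (carrier B))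
                  (comp sym (tensm (alg_counit A a) (idm (vhom C (carrier A) (carrier B)))))).

Context (A B : VFunctor (th_cat T) C)
  (lam : forall a : Jobj J,
           hom (vhom C (carrier A) (carrier B)) (vhom C (fob A a) (fob B a))).

Definition phiJK (a b : Jobj J)
  : hom (tens (th_hom T a b) (vhom C (carrier A) (carrier B))) (vhom C (fob A a) (fob B b)) :=
  comp (vcomp C (fob A a) (fob A b) (fob B b)) (comp sym (tensm (fmap A a b) (lam b))).

Definition psiJK (a b : Jobj J)
  : hom (tens (th_hom T a b) (vhom C (carrier A) (carrier B))) (vhom C (fob A a) (fob B b)) :=
  comp (vcomp C (fob A a) (fob B a) (fob B b)) (tensm (fmap B a b) (lam a)).

Definition PhiJK (a b : Jobj J) := curry (phiJK a b).
Definition PsiJK (a b : Jobj J) := curry (psiJK a b).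

(* Extraordinary V-naturality of alpha_J : v -> C(AJ, BJ) in J in T with respect
   to C(A-,B-) : T^op (x) T -> underline V:  for all J, K the two morphisms
   T(J,K) -> [v, C(AJ,BK)], namely [alpha_J,1] . C(AJ,B-)_{JK} and
   [alpha_K,1] . C(A-,BK)_{KJ}, coincide; written out, they are the transposes of
   v (x) T(J,K) -> T(J,K) (x) v -> C(BJ,BK) (x) C(AJ,BJ) -> C(AJ,BK)  and
   v (x) T(J,K) -> T(J,K) (x) v -> C(AJ,AK) (x) C(AK,BK) -> C(AJ,BK). *)
Definition extranatural_homs (v : ob V)
  (alpha : forall a : Jobj J, hom v (vhom C (fob A a) (fob B a))) : Prop :=
  forall a b : Jobj J,
    curry (comp (vcomp C (fob A a) (fob B a) (fob B b))
                (comp (tensm (fmap B a b) (alpha a)) sym))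
    = curry (comp (vcomp C (fob A a) (fob A b) (fob B b))
                  (comp sym (comp (tensm (fmap A a b) (alpha b)) sym))).

Definition valued_in_homs (v : ob V) (f : hom v (vhom C (carrier A) (carrier B))) : Prop :=
  extranatural_homs v (fun a => comp (lam a) f).

End AlgebraOps.

(* Test the square for (J, K) against the counit B_{KI} . gamma_K of the cotensor
   BK = [K, |B|].  By functoriality of A and B and associativity in C, the B-side
   then contains the square for (J, I) and the A-side the square for (K, I), and
   both reduce to one composite through T-composition T(K,I) ⊗ T(J,K) -> T(J,I).
   Counits of cotensors are jointly monic, so the squares at I force all others;
   and the square for (J, I) is exactly Phi_{JI} . f = Psi_{JI} . f. *)

Section Enriched.
Context (V : SMCCdata) (HV : is_SMCC V).

Local Infix "∘" := comp (at level 40, left associativity).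
Local Infix "⊗" := tensm (at level 35).

Lemma id_comp {X Y : ob V} (f : hom X Y) : idm Y ∘ f = f.
Proof. apply (comp_idl V HV). Qed.

Lemma comp_id {X Y : ob V} (f : hom X Y) : f ∘ idm X = f.
Proof. apply (comp_idr V HV). Qed.

Lemma compA {X Y Z W : ob V} (h : hom Z W) (g : hom Y Z) (f : hom X Y) :
  h ∘ (g ∘ f) = h ∘ g ∘ f.
Proof. apply (comp_assoc V HV). Qed.

Lemma tensm_idm (X Y : ob V) : idm X ⊗ idm Y = idm (tens X Y).
Proof. apply (tensm_id V HV). Qed.

Lemma interchange {X X' X'' Y Y' Y'' : ob V}
  (f' : hom X' X'') (f : hom X X') (g' : hom Y' Y'') (g : hom Y Y') :
  (f' ∘ f) ⊗ (g' ∘ g) = (f' ⊗ g') ∘ (f ⊗ g).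
Proof. apply (tensm_comp V HV). Qed.

Lemma tensm_comp_l {X X' X'' Y Y' : ob V} (f' : hom X' X'') (f : hom X X') (g : hom Y Y') :
  (f' ∘ f) ⊗ g = (f' ⊗ g) ∘ (f ⊗ idm Y).
Proof. rewrite <- interchange, comp_id. reflexivity. Qed.

Lemma tensm_comp_l' {X X' X'' Y Y' : ob V} (f' : hom X' X'') (f : hom X X') (g : hom Y Y') :
  (f' ∘ f) ⊗ g = (f' ⊗ idm Y') ∘ (f ⊗ g).
Proof. rewrite <- interchange, id_comp. reflexivity. Qed.

Lemma tensm_comp_r {X X' Y Y' Y'' : ob V} (f : hom X X') (g' : hom Y' Y'') (g : hom Y Y') :
  f ⊗ (g' ∘ g) = (f ⊗ g') ∘ (idm X ⊗ g).
Proof. rewrite <- interchange, comp_id. reflexivity. Qed.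

Lemma tensm_comp_r' {X X' Y Y' Y'' : ob V} (f : hom X X') (g' : hom Y' Y'') (g : hom Y Y') :
  f ⊗ (g' ∘ g) = (idm X' ⊗ g') ∘ (f ⊗ g).
Proof. rewrite <- interchange, id_comp. reflexivity. Qed.

Lemma tensm_whiskers {X X' Y Y' : ob V} (f : hom X X') (g : hom Y Y') :
  f ⊗ g = (idm X' ⊗ g) ∘ (f ⊗ idm Y).
Proof. rewrite <- interchange, id_comp, comp_id. reflexivity. Qed.

Lemma compK {X Y W : ob V} (g : hom Y X) (f : hom X Y) (p : hom X W) :
  g ∘ f = idm X -> p ∘ g ∘ f = p.
Proof. intro H. rewrite <- compA, H, comp_id. reflexivity. Qed.

Lemma split_epi_cancel {X Y Z : ob V} (M : hom X Y) (N : hom Y X) (L R : hom Y Z) :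
  M ∘ N = idm Y -> L ∘ M = R ∘ M -> L = R.
Proof. intros HMN H. rewrite <- (compK M N L), <- (compK M N R), H by exact HMN. reflexivity. Qed.

Lemma split_mono_cancel {X Y Z : ob V} (M : hom Y Z) (N : hom Z Y) (L R : hom X Y) :
  N ∘ M = idm Y -> M ∘ L = M ∘ R -> L = R.
Proof.
  intros HNM H. rewrite <- (id_comp L), <- (id_comp R), <- HNM, <- !compA, H. reflexivity.
Qed.

Lemma symK {X Y W : ob V} (p : hom (tens X Y) W) : p ∘ sym ∘ sym = p.
Proof. apply compK, (sym_inv V HV). Qed.

Lemma assocK {X Y Z W : ob V} (p : hom (tens X (tens Y Z)) W) : p ∘ assoc ∘ assoc_inv = p.
Proof. apply compK, (assoc_iso1 V HV). Qed.

Lemma assoc_invK {X Y Z W : ob V} (p : hom (tens (tens X Y) Z) W) :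
  p ∘ assoc_inv ∘ assoc = p.
Proof. apply compK, (assoc_iso2 V HV). Qed.

Lemma tensm_idm_rK {X X' Y W : ob V} (g : hom X' X) (f : hom X X') (p : hom (tens X Y) W) :
  g ∘ f = idm X -> p ∘ (g ⊗ idm Y) ∘ (f ⊗ idm Y) = p.
Proof. intro H. apply compK. rewrite <- tensm_comp_l, H, tensm_idm. reflexivity. Qed.

Lemma tensm_idm_lK {X X' Y W : ob V} (g : hom X' X) (f : hom X X') (p : hom (tens Y X) W) :
  g ∘ f = idm X -> p ∘ (idm Y ⊗ g) ∘ (idm Y ⊗ f) = p.
Proof. intro H. apply compK. rewrite <- tensm_comp_r, H, tensm_idm. reflexivity. Qed.

Lemma assoc_inv_nat {X X' Y Y' Z Z' : ob V} (f : hom X X') (g : hom Y Y') (h : hom Z Z') :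
  assoc_inv ∘ (f ⊗ (g ⊗ h)) = ((f ⊗ g) ⊗ h) ∘ assoc_inv.
Proof.
  apply (split_mono_cancel assoc assoc_inv); [apply (assoc_iso2 V HV)|].
  rewrite compA, (assoc_iso1 V HV), id_comp, <- (comp_id (f ⊗ (g ⊗ h))).
  rewrite <- (assoc_iso1 V HV X Y Z), !compA, (assoc_nat V HV). reflexivity.
Qed.

Lemma lunit_inv_nat {X Y : ob V} (f : hom X Y) : lunit_inv ∘ f = (idm unit ⊗ f) ∘ lunit_inv.
Proof.
  apply (split_mono_cancel lunit lunit_inv); [apply (lunit_iso2 V HV)|].
  rewrite !compA, (lunit_iso1 V HV), id_comp, (lunit_nat V HV), (compK _ _ _ (lunit_iso1 V HV _)).
  reflexivity.
Qed.

Lemma tensm_unit_inj {X Y : ob V} (f g : hom X Y) : idm unit ⊗ f = idm unit ⊗ g -> f = g.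
Proof.
  intro H. apply (split_epi_cancel lunit lunit_inv); [apply (lunit_iso1 V HV)|].
  rewrite <- !(lunit_nat V HV), H. reflexivity.
Qed.

(* Kelly's lemma: the proof tensors with I so that the pentagon and triangle apply. *)
Lemma lunit_assoc (X Y : ob V) : lunit ∘ (@assoc V unit X Y) = lunit ⊗ idm Y.
Proof.
  apply tensm_unit_inj.
  apply (split_epi_cancel (assoc ∘ (assoc ⊗ idm Y)) ((assoc_inv ⊗ idm Y) ∘ assoc_inv)).
  { rewrite compA, <- (compA assoc), <- tensm_comp_l, (assoc_iso1 V HV), tensm_idm, comp_id.
    apply (assoc_iso1 V HV). }
  rewrite tensm_comp_r, <- !compA, <- (pentagon V HV).
  rewrite compA, (triangle V HV), <- (tensm_idm X Y), <- (assoc_nat V HV).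
  rewrite <- (triangle V HV), tensm_comp_l, !compA, (assoc_nat V HV). reflexivity.
Qed.

Lemma hexagon_reverse (X Y Z : ob V) :
  @assoc V Z X Y ∘ ((@sym V X Z ⊗ idm Y) ∘ (assoc_inv ∘ (idm X ⊗ @sym V Y Z)))
  = @sym V (tens X Y) Z ∘ assoc_inv.
Proof.
  rewrite !compA.
  apply (split_epi_cancel (@assoc V X Y Z ∘ (sym ∘ @assoc V Z X Y)) (assoc_inv ∘ sym ∘ assoc_inv)).
  { rewrite !compA, assocK, symK. apply (assoc_iso1 V HV). }
  transitivity (@assoc V Z X Y).
  - rewrite (hexagon V HV), !compA, (tensm_idm_lK _ _ _ (sym_inv V HV _ _)), assoc_invK,
      (tensm_idm_rK _ _ _ (sym_inv V HV _ _)).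
    reflexivity.
  - rewrite !compA, assoc_invK, (sym_inv V HV), id_comp. reflexivity.
Qed.

Lemma curry_nat {X Y Z Z' : ob V} (g : hom (tens X Z) Y) (h : hom Z' Z) :
  curry g ∘ h = curry (g ∘ (idm X ⊗ h)).
Proof.
  rewrite <- (curry_unique V HV _ _ _ (curry g ∘ h)), tensm_comp_r, compA, (ev_curry V HV).
  reflexivity.
Qed.

Lemma curry_inj {X Y Z : ob V} (g h : hom (tens X Z) Y) : curry g = curry h -> g = h.
Proof.
  intro H. rewrite <- (ev_curry V HV _ _ _ g), <- (ev_curry V HV _ _ _ h), H. reflexivity.
Qed.

Lemma ihom_ext {X Y Z : ob V} (g h : hom Z (ihom X Y)) :
  ev ∘ (idm X ⊗ g) = ev ∘ (idm X ⊗ h) -> g = h.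
Proof.
  intro H. rewrite <- (curry_unique V HV _ _ _ g), <- (curry_unique V HV _ _ _ h), H.
  reflexivity.
Qed.

(* In the opposite of underline V every object X is the cotensor [X, I], with
   counit the transpose of the left unitor; the inverse of the comparison map
   [X, Y] -> [X, [I, Y]] is postcomposition with ev : I ⊗ [I, Y] -> Y. *)
Lemma underlineV_op_cotensor (X : ob V) :
  is_cotensor (vop (underlineV V)) X unit X (curry (@lunit V X)).
Proof.
  intro Y. unfold cot_map; cbn.
  set (Cot := curry _).
  assert (HCot : ev ∘ (idm unit ⊗ (ev ∘ (idm X ⊗ Cot))) = lunit ∘ (idm unit ⊗ ev)).
  { unfold Cot. rewrite (ev_curry V HV), !tensm_comp_r, !compA, (ev_curry V HV).
    rewrite (tensm_idm_lK _ _ _ (sym_inv V HV _ _)), <- (compA _ assoc_inv), assoc_inv_nat, compA.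
    rewrite <- (compA _ (ev ⊗ idm _)), <- tensm_comp_l, (ev_curry V HV).
    rewrite <- lunit_assoc, !compA, assocK, (lunit_nat V HV). reflexivity. }
  exists (curry (ev ∘ (idm unit ⊗ ev) ∘ lunit_inv)). split.
  - apply ihom_ext. rewrite tensm_idm, comp_id, tensm_comp_r, compA, (ev_curry V HV).
    rewrite <- (compA _ lunit_inv), lunit_inv_nat, compA, <- (compA ev), <- tensm_comp_r, HCot.
    rewrite (lunit_nat V HV), (compK _ _ _ (lunit_iso1 V HV _)). reflexivity.
  - apply ihom_ext. rewrite tensm_idm, comp_id, tensm_comp_r, compA.
    apply ihom_ext. rewrite tensm_comp_r, compA, HCot, <- compA, <- tensm_comp_r, (ev_curry V HV).
    rewrite (lunit_nat V HV), <- compA, (lunit_iso2 V HV), comp_id. reflexivity.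
Qed.

Lemma cotensor_counit_cancel (C : VCat V) (X : ob V) (c0 k x : vob C)
  (gam : hom X (vhom C k c0)) {Z : ob V} (g h : hom Z (vhom C x k)) :
  is_cotensor C X c0 k gam ->
  vcomp C x k c0 ∘ (gam ⊗ g) = vcomp C x k c0 ∘ (gam ⊗ h) -> g = h.
Proof.
  intros Hcot H. destruct (Hcot x) as [inv [Hinv _]].
  apply (split_mono_cancel _ inv _ _ Hinv). unfold cot_map.
  rewrite !curry_nat, <- !compA, <- !interchange, !id_comp, !comp_id, H. reflexivity.
Qed.

Section Algebras.
Context (J : Arities V) (T : JTheory J) (HT : is_JTheory T) (C : VCat V).

Lemma algebra_cotensor (B : VFunctor (th_cat T) C) (HB : is_algebra T B) (b : Jobj J) :
  is_cotensor C (proj1_sig b) (carrier T B) (fob B b) (alg_counit T B b).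
Proof.
  apply (proj2 HB _ (proj2_sig b)), (proj2 (proj2 HT) _ (proj2_sig b)).
  intro x. exact (underlineV_op_cotensor (proj1_sig b) (proj1_sig x)).
Qed.

Context (HC : is_vcat C) (A B : VFunctor (th_cat T) C) (HA : is_algebra T A) (HB : is_algebra T B)
  (lam : forall a : Jobj J,
           hom (vhom C (carrier T A) (carrier T B)) (vhom C (fob A a) (fob B a)))
  (v : ob V) (f : hom v (vhom C (carrier T A) (carrier T B))).

Definition homomorphism_square (a b : Jobj J) : Prop :=
  vcomp C (fob A a) (fob B a) (fob B b) ∘ (fmap B a b ⊗ (lam a ∘ f))
  = vcomp C (fob A a) (fob A b) (fob B b) ∘ (sym ∘ (fmap A a b ⊗ (lam b ∘ f))).

Lemma valued_in_homs_iff_squares :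
  valued_in_homs T A B lam v f <-> forall a b, homomorphism_square a b.
Proof.
  unfold valued_in_homs, extranatural_homs, homomorphism_square. split; intros H a b.
  - apply (split_epi_cancel sym sym); [apply (sym_inv V HV)|].
    rewrite <- !compA. apply curry_inj, H.
  - rewrite !compA, H, !compA. reflexivity.
Qed.

Lemma Phi_Psi_eq_iff_square (a b : Jobj J) :
  PhiJK T A B lam a b ∘ f = PsiJK T A B lam a b ∘ f <-> homomorphism_square a b.
Proof.
  unfold PhiJK, PsiJK, phiJK, psiJK, homomorphism_square.
  rewrite !curry_nat, <- !compA, <- !interchange, !comp_id.
  split; intro H; [apply eq_sym, curry_inj, H | apply f_equal, eq_sym, H].
Qed.

Lemma vcomp_assoc_inv (w x y z : vob C) :
  vcomp C w y z ∘ (idm _ ⊗ vcomp C w x y)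
  = vcomp C w x z ∘ (vcomp C x y z ⊗ idm _) ∘ assoc_inv.
Proof. rewrite (proj1 HC), <- !compA, (assoc_iso1 V HV), comp_id. reflexivity. Qed.

Lemma B_side_through_counit (a b : Jobj J) :
  homomorphism_square a (JI J) ->
  vcomp C (fob A a) (fob B b) (fob B (JI J))
    ∘ (alg_counit T B b ⊗ (vcomp C (fob A a) (fob B a) (fob B b) ∘ (fmap B a b ⊗ (lam a ∘ f))))
  = vcomp C _ _ _ ∘ ((lam (JI J) ∘ f)
      ⊗ (fmap A a (JI J) ∘ (th_comp T a b (JI J) ∘ (gammaJ T b ⊗ idm _)))) ∘ sym ∘ assoc_inv.
Proof.
  unfold alg_counit, homomorphism_square, carrier. intro Ha.
  rewrite interchange, (tensm_whiskers (fmap B b (JI J))), !compA, vcomp_assoc_inv.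
  rewrite <- (compA _ (fmap B b (JI J) ⊗ idm _)), <- interchange, id_comp.
  rewrite <- (compA _ assoc_inv), assoc_inv_nat, compA.
  rewrite <- (compA _ (vcomp C _ _ _ ⊗ idm _)), <- interchange, id_comp.
  rewrite (tensm_comp_l (fmap B b (JI J))), (compA (vcomp C _ _ _)), <- (proj1 (proj1 HB)).
  rewrite <- (compA (fmap B a (JI J))), (tensm_comp_l (fmap B a (JI J))), (compA (vcomp C _ _ _)), Ha.
  rewrite (sym_nat V HV), !compA, <- (compA _ sym), (sym_nat V HV), compA.
  rewrite <- (compA _ (_ ⊗ fmap A a (JI J))), <- interchange, comp_id, !compA. reflexivity.
Qed.

Lemma A_side_through_counit (a b : Jobj J) :
  homomorphism_square b (JI J) ->
  vcomp C (fob A a) (fob B b) (fob B (JI J))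
    ∘ (alg_counit T B b
       ⊗ (vcomp C (fob A a) (fob A b) (fob B b) ∘ (sym ∘ (fmap A a b ⊗ (lam b ∘ f)))))
  = vcomp C _ _ _ ∘ ((lam (JI J) ∘ f)
      ⊗ (fmap A a (JI J) ∘ (th_comp T a b (JI J) ∘ (gammaJ T b ⊗ idm _)))) ∘ sym ∘ assoc_inv.
Proof.
  unfold alg_counit, homomorphism_square, carrier. intro Hb.
  rewrite (sym_nat V HV), (compA (vcomp C (fob A a) (fob A b) (fob B b))).
  rewrite (tensm_comp_r (fmap B b (JI J) ∘ _)), (tensm_comp_r' (fmap B b (JI J) ∘ _)), !compA.
  rewrite vcomp_assoc_inv, <- (compA _ assoc_inv), assoc_inv_nat, compA.
  rewrite <- (compA _ (vcomp C _ _ _ ⊗ idm _)), <- interchange, id_comp.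
  rewrite (tensm_comp_l (fmap B b (JI J))), (compA (vcomp C (fob A b) _ _)), Hb, (sym_nat V HV).
  rewrite <- (compA (vcomp C (fob A b) _ _)), <- (compA _ sym), (sym_nat V HV).
  rewrite (compA (_ ⊗ fmap A b (JI J))), <- interchange, comp_id.
  rewrite (compA (vcomp C (fob A b) _ _)), (tensm_comp_l (_ ∘ _) sym (fmap A a b)).
  rewrite (tensm_comp_l' (vcomp C (fob A b) _ _)), !compA, (proj1 HC), compA.
  rewrite <- (compA _ assoc), (assoc_nat V HV), compA.
  rewrite <- (compA _ (idm _ ⊗ _)), <- interchange, id_comp.
  rewrite (tensm_comp_l (fmap A b (JI J))), (compA (vcomp C (fob A a) (fob A b) (fob A (JI J)))).
  rewrite <- (proj1 (proj1 HA)), <- !compA, hexagon_reverse, !compA. reflexivity.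
Qed.

Lemma squares_from_unit_squares :
  (forall a, homomorphism_square a (JI J)) -> forall a b, homomorphism_square a b.
Proof.
  intros HI a b. apply (cotensor_counit_cancel C _ _ _ _ _ _ _ (algebra_cotensor B HB b)).
  etransitivity; [apply B_side_through_counit, HI | symmetry; apply A_side_through_counit, HI].
Qed.

End Algebras.
End Enriched.

(* [Hlam] is deliberately unused: the equivalence holds for any family [lam]. *)
Theorem proposition4p10
  (V : SMCCdata) (HV : is_SMCC V) (J : Arities V)
  (T : JTheory J) (HT : is_JTheory T)
  (C : VCat V) (HC : is_vcat C)
  (A B : VFunctor (th_cat T) C) (HA : is_algebra T A) (HB : is_algebra T B)
  (lam : forall a : Jobj J,
           hom (vhom C (carrier T A) (carrier T B)) (vhom C (fob A a) (fob B a)))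
  (Hlam : is_lambda T A B lam)
  (v : ob V) (f : hom v (vhom C (carrier T A) (carrier T B))) :
  valued_in_homs T A B lam v f <->
  (forall a : Jobj J,
     comp (PhiJK T A B lam a (JI J)) f = comp (PsiJK T A B lam a (JI J)) f).
Proof.
  pose proof (valued_in_homs_iff_squares V HV J T C A B lam v f) as Hsquares.
  pose proof (Phi_Psi_eq_iff_square V HV J T C A B lam v f) as HPhiPsi.
  split.
  - intros Hhom a. apply HPhiPsi, Hsquares, Hhom.
  - intro Hunit. apply Hsquares, (squares_from_unit_squares V HV J T HT C HC A B HA HB lam v f).
    intro a. apply HPhiPsi, Hunit.
Qed.
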